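(* Let $H$ be a digraph with at least two vertices and $r\in V(H)$ such that every vertex of $H$ is reachable from $r$, and let $(\hat T,\{B_x\}_{x\in V(\hat T)})$ be the $r$-rooted cut decomposition of $H$. Let $x\in V(\hat T)$, let $\hat P=x_0x_1\dots x_\ell$ be the path in $\hat T$ from $r=x_0$ to $x=x_\ell$, and let $F_0,\dots,F_\ell$ be the fins of $\hat P$. Let $P$ be a directed path in $H$ from $r$ to a vertex $v\in B_x$. Then for every $0\le i<\ell$, $P$ visits $x_i$ before $x_{i+1}$, and the vertices of the subpath $P[x_i,x_{i+1}]$ other than $x_{i+1}$ are all contained in $\bigcup_{y\in F_i}B_y$.
   Context: Digraphs are finite and without loops; paths are directed. For a path $P$ and vertices $a,b$ on it with $a$ before $b$, $P[a,b]$ is the subpath from $a$ to $b$. A vertex $v$ is bi-reachable from $r$ if there are two internally vertex-disjoint directed paths from $r$ to $v$. For a digraph $H$ with at least two vertices and $r\in V(H)$ such that every vertex of $H$ is reachable from $r$, the diblock $B_r$ of $r$ in $H$ is the set of all vertices bi-reachable from $r$, together with $r$ and all out-neighbours of $r$. For $x\in B_r\setminus\{r\}$ let $X_x$ be the set of vertices $v\in V(H)\setminus B_r$ such that every directed $r$–$v$ path intersects $B_r$ for the last time in $x$; $x$ is a bottleneck of $B_r$ if $X_x\ne\emptyset$ (the sets $X_x$ partition $V(H)\setminus B_r$). The $r$-rooted cut decomposition $(\hat T,\{B_x\}_{x\in V(\hat T)})$ of $H$ is defined recursively: $\hat T$ is a rooted tree with root $r$ and $V(\hat T)\subseteq V(H)$;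 the set associated with the root is $B_r$; the children of $r$ are the bottlenecks of $B_r$; and for each bottleneck $x$, the subtree of $\hat T$ rooted at $x$ together with its associated sets is the $x$-rooted cut decomposition of the induced subgraph $H[X_x\cup\{x\}]$. For a node $x$, $\hat T_x$ is the subtree of $\hat T$ rooted at $x$. For a path $x_0x_1\dots x_\ell$ in $\hat T$ from the root $x_0$, its fins are $F_{i}=V(\hat T_{x_i})\setminus V(\hat T_{x_{i+1}})$ for $0\le i<\ell$ and $F_\ell=V(\hat T_{x_\ell})$. *)

From mathcomp Require Import all_boot.
Set Implicit Arguments. Unset Strict Implicit. Unset Printing Implicit Defensive.

Section CutDecomposition.
Variables (V : finType) (e : rel V).

(* [a :: p] is a directed (simple) path from a to b in the induced subgraph H[S]. *)
Definition dipath (S : V -> Prop) (a b : V) (p : seq V) : Prop :=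
  [/\ path e a p, last a p = b, uniq (a :: p) & forall u, u \in a :: p -> S u].

Definition interior (a : V) (p : seq V) : seq V := behead (belast a p).

Definition bireachable (S : V -> Prop) (r v : V) : Prop :=
  exists p1 p2, [/\ dipath S r v p1, dipath S r v p2 &
    ~~ has (fun u => u \in interior r p2) (interior r p1)].

Definition in_diblock (S : V -> Prop) (r v : V) : Prop :=
  S v /\ (v = r \/ e r v \/ bireachable S r v).

Definition last_hit_is (B : V -> Prop) (q : seq V) (x : V) : Prop :=
  exists k, [/\ k < size q, nth x q k = x, B x &
    forall j, k < j < size q -> ~ B (nth x q j)].

Definition in_X (S : V -> Prop) (r x v : V) : Prop :=
  [/\ S v, ~ in_diblock S r v &
    forall p, dipath S r v p -> last_hit_is (in_diblock S r) (r :: p) x].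

Definition bottleneck (S : V -> Prop) (r x : V) : Prop :=
  [/\ in_diblock S r x, x <> r & exists v, in_X S r x v].

(* cut_node S r q B : in the r-rooted cut decomposition of H[S], q is the
   path in T^ from the root r to some node y (so y = last element of q),
   and B is the set B_y associated with y. *)
Inductive cut_node : (V -> Prop) -> V -> seq V -> (V -> Prop) -> Prop :=
| cut_root S r : cut_node S r [:: r] (in_diblock S r)
| cut_sub S r x p B : bottleneck S r x ->
    cut_node (fun v => in_X S r x v \/ v = x) x p B ->
    cut_node S r (r :: p) B.

(* u lies in the union of the B_y over y in the fin F_i of the T^-path xs
   (F_i = nodes of T^_{x_i} not in T^_{x_{i+1}}), for the decomposition of H. *)
Definition in_fin_union (r : V) (xs : seq V) (i : nat) (u : V) : Prop :=
  exists q B, [/\ cut_node (fun _ => True) r q B,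
    prefix (take i.+1 xs) q, ~~ prefix (take i.+2 xs) q & B u].

End CutDecomposition.

(* The last vertex of B_r on an r-v path does not depend on the path: if two
   paths left B_r for the last time at different vertices a and b, the first
   vertex z where their tails meet would be joined to r avoiding any single
   vertex (through a or through b), hence bi-reachable by Menger's theorem for
   two paths, i.e. z would lie in B_r.  So every r-v path with v outside B_r
   passes through the bottleneck x_1 with X_{x_1} containing v, and its part
   after x_1 is a path in H[X_{x_1} ∪ {x_1}].  The vertices before x_1 lie in
   blocks of the decomposition that are not below x_1, i.e. in F_0, and
   induction along x_0 x_1 ... x_l handles the later segments. *)

From mathcomp Require Import all_boot.
From mathcomp Require Import zify.
From Stdlib Require Import Classical.
Set Implicit Arguments. Unset Strict Implicit. Unset Printing Implicit Defensive.

Section SeqFacts.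
Variable T : eqType.
Implicit Types (x c u : T) (s : seq T).

Lemma mem_last_nonnil x s : s != [::] -> last x s \in s.
Proof. by case: s => // y s _; rewrite /= mem_last. Qed.

Lemma uniq_cat_notin s1 s2 u : uniq (s1 ++ s2) -> u \in s1 -> u \notin s2.
Proof. by rewrite cat_uniq => /and3P[_ /hasPn s2N1 _] u1; apply: contraL u1 => /s2N1. Qed.

Lemma split_at_mem x c s :
  c \in x :: s -> exists s1 s2, s = s1 ++ s2 /\ last x s1 = c.
Proof.
rewrite in_cons => /predU1P[->|]; first by exists [::], s.
by case/splitPr=> s1 s2; exists (rcons s1 c), s2; rewrite cat_rcons last_rcons.
Qed.

Lemma split_last_hit (B : T -> Prop) x s : B x ->
  exists s1 s2, [/\ s = s1 ++ s2, B (last x s1) & forall u, u \in s2 -> ~ B u].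
Proof.
move=> Bx; elim/last_ind: s => [|s y [s1 [s2 [-> B1 N2]]]]; first by exists [::], [::].
have [By|NBy] := classic (B y).
  by exists (rcons (s1 ++ s2) y), [::]; rewrite cats0 last_rcons.
exists s1, (rcons s2 y); split; rewrite ?rcons_cat // => u.
by rewrite mem_rcons in_cons => /predU1P[->|/N2].
Qed.

Lemma index_cat_uniq s1 s2 u : uniq (s1 ++ s2) -> u \in s2 ->
  index u (s1 ++ s2) = size s1 + index u s2.
Proof.
move=> U u2; rewrite index_cat; case: ifP => // u1.
by rewrite (negbTE (uniq_cat_notin U u1)) in u2.
Qed.

End SeqFacts.

Section FinSeqFacts.
Variable V : finType.

Lemma mem_interior (x : V) s u : uniq (x :: s) ->
  (u \in interior x s) = (u \in s) && (u != last x s).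
Proof.
case: s => [|y s] // Uxys; have : uniq (y :: s) by case/andP: Uxys.
rewrite /interior [behead _]/= (lastI y s) last_rcons.
rewrite rcons_uniq mem_rcons in_cons => /andP[Nlast _].
case: eqP => [->|_] /=; last by rewrite andbT.
exact: negbTE.
Qed.

Variable B : V -> Prop.

Lemma last_hit_is_cat r s1 s2 : B (last r s1) -> (forall u, u \in s2 -> ~ B u) ->
  last_hit_is B (r :: s1 ++ s2) (last r s1).
Proof.
move=> B1 N2; exists (size s1); split=> //.
- by rewrite /= size_cat ltnS leq_addr.
- by rewrite -cat_cons nth_cat /= ltnSn (set_nth_default r) // -last_nth.
move=> j /andP[lt_s1j lt_j]; rewrite -cat_cons nth_cat /= ltnS leqNgt lt_s1j /=.
by apply/N2/mem_nth; move: lt_j; rewrite /= size_cat; lia.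
Qed.

Lemma last_hit_is_uniq q x y : last_hit_is B q x -> last_hit_is B q y -> x = y.
Proof.
move=> [k1 [lt1 nth1 B1 after1]] [k2 [lt2 nth2 B2 after2]].
case: (ltngtP k1 k2) => cmp.
- by case: (after1 k2); rewrite ?cmp // (set_nth_default y) // nth2.
- by case: (after2 k1); rewrite ?cmp // (set_nth_default x) // nth1.
- by rewrite -nth1 -nth2 cmp (set_nth_default y).
Qed.

Lemma last_hit_isP r s x : B r -> last_hit_is B (r :: s) x ->
  exists s1 s2, [/\ s = s1 ++ s2, last r s1 = x, B x & forall u, u \in s2 -> ~ B u].
Proof.
move=> Br hit; have [s1 [s2 [Es B1 N2]]] := split_last_hit s Br.
have := last_hit_is_cat B1 N2; rewrite -Es => /(last_hit_is_uniq hit) Ex.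
by exists s1, s2; rewrite Ex.
Qed.

End FinSeqFacts.

Section Dipaths.
Variables (V : finType) (e : rel V) (S : V -> Prop).
Implicit Types (a b c r w z : V) (p q : seq V).

Lemma dipath_head a b p : dipath e S a b p -> S a.
Proof. by case=> _ _ _; apply; rewrite mem_head. Qed.

Lemma dipath_last a b p : dipath e S a b p -> S b.
Proof. by case=> _ <- _; apply; rewrite mem_last. Qed.

Lemma dipath_nil a : S a -> dipath e S a a [::].
Proof. by move=> Sa; split=> // u; rewrite inE => /eqP->. Qed.

Lemma dipath_split a b p1 p2 : dipath e S a b (p1 ++ p2) ->
  dipath e S a (last a p1) p1 /\ dipath e S (last a p1) b p2.
Proof.
case; rewrite cat_path last_cat -cat_cons => /andP[path1 path2] last2 U SS.
have U1 : uniq (a :: p1) by move: U; rewrite cat_uniq => /and3P[].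
have N2 : last a p1 \notin p2 by apply: uniq_cat_notin U _; rewrite mem_last.
split; split=> //; first by move=> u u1; apply: SS; rewrite mem_cat u1.
- by rewrite /= N2; move: U; rewrite cat_uniq => /and3P[].
- move=> u; rewrite in_cons => /predU1P[->|u2]; apply: SS; rewrite mem_cat ?mem_last //.
  by rewrite u2 orbT.
Qed.

Lemma dipath_cat a b c p1 p2 : dipath e S a c p1 -> dipath e S c b p2 ->
  (forall w, w \in a :: p1 -> w \notin p2) -> dipath e S a b (p1 ++ p2).
Proof.
case=> path1 last1 U1 S1 [path2 last2 U2' S2] disj.
have U2 : uniq p2 by case/andP: U2'.
split; first by rewrite cat_path path1 last1.
- by rewrite last_cat last1.
- by rewrite -cat_cons cat_uniq U1 U2 andbT; apply/hasPn=> w w2; apply/negP=> /disj/negP.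
move=> u; rewrite -cat_cons mem_cat => /orP[/S1 //|u2].
by apply: S2; rewrite in_cons u2 orbT.
Qed.

Lemma shorten_dipath a q : S a -> path e a q -> (forall u, u \in q -> S u) ->
  exists p, dipath e S a (last a q) p /\ {subset p <= q}.
Proof.
move=> Sa pathq Sq; case: (shortenP pathq) => p pathp Up sub_pq.
exists p; split=> //; split=> // u.
by rewrite in_cons => /predU1P[->//|/sub_pq/Sq].
Qed.

Lemma dipath_shorten_cat r a b pa q : dipath e S r a pa -> dipath e S a b q ->
  exists p, dipath e S r b p /\ {subset p <= pa ++ q}.
Proof.
move=> Dpa [path_q last_q _ Sq]; case: (Dpa) => path_a last_a _ Sa.
have := @shorten_dipath r (pa ++ q) (dipath_head Dpa).
rewrite last_cat last_a last_q; apply; first by rewrite cat_path path_a last_a.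
move=> u; rewrite mem_cat => /orP[ua|uq]; [apply: Sa | apply: Sq];
  by rewrite in_cons ?ua ?uq orbT.
Qed.

Lemma in_diblock_bireachable r a : S r -> in_diblock e S r a -> bireachable e S r a.
Proof.
move=> Sr [Sa [->|[ra|//]]]; first by exists [::], [::]; split=> //; apply: dipath_nil.
have [->|Nar] := eqVneq a r; first by exists [::], [::]; split=> //; apply: dipath_nil.
have Dra : dipath e S r a [:: a].
  split=> /=; rewrite ?ra ?in_cons 1?eq_sym ?(negbTE Nar) //.
  by move=> u; rewrite !inE => /orP[]/eqP->.
by exists [:: a], [:: a]; split.
Qed.

Lemma bireachable_avoid r a u : bireachable e S r a -> u != r -> u != a ->
  exists p, dipath e S r a p /\ u \notin p.
Proof.
move=> [p1 [p2 [D1 D2 disj]]] Nur Nua.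
have [u1|] := boolP (u \in p1); last by exists p1.
have [u2|] := boolP (u \in p2); last by exists p2.
case/hasP: disj; exists u.
  by case: D1 => _ last1 U1 _; rewrite mem_interior // u1 last1.
by case: D2 => _ last2 U2 _; rewrite mem_interior // u2 last2.
Qed.

End Dipaths.

Section Menger.
Variables (V : finType) (e : rel V) (S : V -> Prop) (r z : V).
Implicit Types (c d w y : V) (s xp yp : seq V).

(* Invariant of the augmenting proof of Menger's theorem: the r-z path xp and
   the r-y path yp share only y; each step moves y strictly further along xp. *)
Definition meeting_paths xp yp y X1 X2 :=
  [/\ dipath e S r z xp, dipath e S r y yp, xp = X1 ++ y :: X2 &
      forall w, w \in yp -> w \in xp -> w = y].

Lemma meeting_paths_uniq xp yp y X1 X2 : meeting_paths xp yp y X1 X2 ->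
  [/\ r \notin xp, y \notin X1, y \notin X2 & forall w, w \in X1 -> w \notin X2].
Proof.
case=> [[_ _ Urx _] _ Ex _]; have Ux : uniq xp by case/andP: Urx.
split; first by case/andP: Urx.
all: move: Ux; rewrite Ex.
- by rewrite cat_uniq => /and3P[_ /hasPn/(_ y (mem_head _ _))].
- by rewrite cat_uniq => /and3P[_ _ /andP[]].
- by move=> U w w1; apply: contraNN (uniq_cat_notin U w1); rewrite in_cons => ->; rewrite orbT.
Qed.

Lemma meeting_paths_at_end xp yp X1 X2 :
  meeting_paths xp yp z X1 X2 -> bireachable e S r z.
Proof.
case=> Dx Dy _ meet; exists xp, yp; split=> //; apply/hasPn => u.
case: (Dx) (Dy) => [_ lastx Ux _] [_ lasty Uy _].
rewrite !mem_interior // lastx lasty => /andP[ux Nuz]; apply/negP => /andP[uy _].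
by move: Nuz; rewrite (meet u uy ux) eqxx.
Qed.

Lemma meeting_paths_reroute_y xp yp y X1 X2 c s d D1 D2 :
  meeting_paths xp yp y X1 X2 -> dipath e S c d (rcons s d) ->
  c \in r :: yp -> c != y -> X2 = D1 ++ d :: D2 ->
  (forall w, w \in s -> (w \notin r :: xp) && (w \notin yp)) ->
  exists yp', meeting_paths xp yp' d (X1 ++ y :: D1) D2.
Proof.
move=> M Dcd cy Ncy EX2 avoid; have [rx yX1 yX2 _] := meeting_paths_uniq M.
case: M => Dx Dy Ex meet.
have dX2 : d \in X2 by rewrite EX2 mem_cat mem_head orbT.
have dx : d \in xp by rewrite Ex mem_cat in_cons dX2 !orbT.
have Ndy : d != y by apply: contraNneq yX2 => <-.
have dyp : d \notin yp by apply: contra Ndy => dyp; rewrite (meet d dyp dx).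
have [yq1 [yq2 [Eyp last1]]] := split_at_mem cy.
move: (Dy); rewrite Eyp => /dipath_split; rewrite last1 => -[Dyq1 Dyq2].
have yq2y : y \in yq2.
  case: (Dyq2) Ncy => _ <- _ _ Ncy'.
  by apply: mem_last_nonnil; apply: contra_neq Ncy' => ->.
have yq1y : y \notin r :: yq1.
  by apply: contraL yq2y; apply: uniq_cat_notin; case: Dy; rewrite Eyp.
have sub1 w : w \in r :: yq1 -> w \in r :: yp.
  by rewrite !in_cons Eyp mem_cat => /orP[->|->]; rewrite ?orbT.
exists (yq1 ++ rcons s d); split=> //.
- apply: (dipath_cat Dyq1 Dcd) => w /sub1 w1; rewrite mem_rcons in_cons negb_or.
  apply/andP; split.
    apply: contraTneq w1 => ->; rewrite in_cons (negbTE dyp) orbF.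
    by apply: contraNneq rx => <-.
  apply: contraTN w1 => /avoid /andP[rw yw]; rewrite in_cons negb_or yw andbT.
  by apply: contra rw => /eqP->; rewrite mem_head.
- by rewrite Ex EX2 -catA.
move=> w; rewrite mem_cat mem_rcons in_cons => /or3P[wq1|/eqP//|ws] wx.
  by move: yq1y; rewrite -(meet w) ?in_cons ?wq1 ?orbT // Eyp mem_cat wq1.
by have /andP[/negP[]] := avoid w ws; rewrite in_cons wx orbT.
Qed.

Lemma meeting_paths_reroute_x xp yp y X1 X2 c s d D1 D2 :
  meeting_paths xp yp y X1 X2 -> dipath e S c d (rcons s d) ->
  c \in r :: X1 -> X2 = D1 ++ d :: D2 ->
  (forall w, w \in s -> (w \notin r :: xp) && (w \notin yp)) ->
  exists xp' yp', meeting_paths xp' yp' d (yp ++ D1) D2.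
Proof.
move=> M Dcd cX1 EX2 avoid; have [rx yX1 yX2 X12] := meeting_paths_uniq M.
case: M => Dx Dy Ex meet.
have dX2 : d \in X2 by rewrite EX2 mem_cat mem_head orbT.
have xE w : (w \in xp) = [|| w \in X1, w == y | w \in X2] by rewrite Ex mem_cat in_cons.
have [X11 [X12' [EX1 last1]]] := split_at_mem cX1.
have sub1 w : w \in X11 -> w \in X1 by rewrite EX1 mem_cat => ->.
have DX11 : dipath e S r c X11.
  by move: Dx; rewrite Ex EX1 -catA => /dipath_split; rewrite last1 => -[].
have DX2 : dipath e S y z X2.
  by move: Dx; rewrite Ex -cat_rcons => /dipath_split; rewrite last_rcons => -[].
exists (yp ++ X2), (X11 ++ rcons s d); split.
- apply: (dipath_cat Dy DX2) => w; rewrite in_cons => /predU1P[->|wy].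
    by apply: contra rx; rewrite xE => ->; rewrite !orbT.
  by apply: contra yX2 => wX2; rewrite -(meet w wy) // xE wX2 !orbT.
- apply: (dipath_cat DX11 Dcd) => w w1; rewrite mem_rcons in_cons negb_or.
  have wx : w \in r :: xp.
    by move: w1; rewrite !in_cons xE => /orP[->|/sub1->]; rewrite ?orbT.
  apply/andP; split; last by apply: contraL wx => /avoid/andP[].
  apply: contraTneq w1 => ->; rewrite in_cons negb_or.
  apply/andP; split; first by apply: contraNneq rx => <-; rewrite xE dX2 !orbT.
  by apply/negP => /sub1/X12; rewrite dX2.
- by rewrite EX2 catA.
move=> w; rewrite mem_cat mem_rcons in_cons => /or3P[w11|/eqP//|ws].
  rewrite mem_cat => /orP[wy|wX2]; last by move: (X12 w (sub1 w w11)); rewrite wX2.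
  by move: yX1; rewrite -(meet w wy) ?xE ?sub1.
have /andP[wx wy] := avoid w ws.
by rewrite mem_cat (negbTE wy) /= => wX2; rewrite in_cons xE wX2 !orbT in wx.
Qed.

Hypothesis no_cut : forall u, u != r -> u != z ->
  exists p, dipath e S r z p /\ u \notin p.

Lemma meeting_paths_bridge xp yp y X1 X2 : meeting_paths xp yp y X1 X2 -> y != z ->
  exists c s d, [/\ dipath e S c d (rcons s d),
    (c \in r :: X1) || (c \in r :: yp) && (c != y), d \in X2 &
    forall w, w \in s -> (w \notin r :: xp) && (w \notin yp)].
Proof.
move=> M Nyz; have [rx yX1 yX2 X12] := meeting_paths_uniq M.
case: M => Dx Dy Ex meet.
have xE w : (w \in xp) = [|| w \in X1, w == y | w \in X2] by rewrite Ex mem_cat in_cons.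
have Nyr : y != r by apply: contraNneq rx => <-; rewrite xE eqxx orbT.
have [rp [Dr yrp]] := no_cut Nyr Nyz.
pose K w := (w \in r :: X1) || (w \in r :: yp) && (w != y).
have Kr : K r by rewrite /K mem_head.
have [rp1 [rp2 [Erp Kc NK2]]] := split_last_hit (B := fun w => K w) rp Kr.
set c := last r rp1 in Kc.
move: (Dr); rewrite Erp => /dipath_split [_ Dr2].
have zX2 : z \in X2.
  have : z \in y :: X2 by case: Dx => _ <- _ _; rewrite Ex last_cat /= mem_last.
  by rewrite in_cons eq_sym (negbTE Nyz).
have zx : z \in xp by rewrite xE zX2 !orbT.
have NKz : ~~ K z.
  have Nzr : z != r by apply: contraNneq rx => <-.
  have zyp : z \notin yp by apply: contraTN Nyz => zyp; rewrite (meet z zyp zx) eqxx.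
  rewrite /K !in_cons (negbTE Nzr) (negbTE zyp) /= orbF.
  by apply/negP => /X12; rewrite zX2.
have zrp2 : z \in rp2.
  case: (Dr2) => _ last2 _ _; have : z \in c :: rp2 by rewrite -last2 mem_last.
  by rewrite in_cons => /predU1P[zc|//]; move: NKz; rewrite zc Kc.
have hitXY : has (fun w => (w \in r :: xp) || (w \in yp)) rp2.
  by apply/hasP; exists z; rewrite // in_cons zx orbT.
move: Erp Dr2 NK2; case/split_find: hitXY => d s s2 XYd NXYs Erp Dr2 NK2.
have drp2 : d \in rcons s d ++ s2 by rewrite mem_cat mem_rcons mem_head.
have NKd := NK2 d drp2.
have Ndy : d != y by apply: contraNneq yrp => <-; rewrite Erp mem_cat drp2 orbT.
exists c, s, d; split=> //.
- by move: Dr2 => /dipath_split[+ _]; rewrite last_rcons.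
- have Ndr : d != r by apply: contra_not_neq NKd => ->.
  have dX1 : d \notin X1 by apply/negP => dX1; apply: NKd; rewrite /K in_cons dX1 orbT.
  have dyp : d \notin yp by apply/negP => dyp; apply: NKd; rewrite /K !in_cons dyp Ndy !orbT.
  move: XYd; rewrite in_cons xE (negbTE Ndr) (negbTE dX1) (negbTE Ndy) (negbTE dyp).
  by rewrite /= orbF.
by move=> w ws; have := hasPn NXYs w ws; rewrite negb_or.
Qed.

Lemma meeting_paths_step xp yp y X1 X2 : meeting_paths xp yp y X1 X2 -> y != z ->
  exists xp' yp' d X1' X2', meeting_paths xp' yp' d X1' X2' /\ size X2' < size X2.
Proof.
move=> M Nyz; have [c [s [d [Dcd cK dX2 avoid]]]] := meeting_paths_bridge M Nyz.
case/splitPr: dX2 M avoid => D1 D2 M avoid.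
have lt_D2 : size D2 < size (D1 ++ d :: D2) by rewrite size_cat /= addnS ltnS leq_addl.
case/orP: cK => [cX1|/andP[cy Ncy]].
  have [xp' [yp' M']] := meeting_paths_reroute_x M Dcd cX1 (erefl _) avoid.
  by exists xp', yp', d, (yp ++ D1), D2.
have [yp' M'] := meeting_paths_reroute_y M Dcd cy Ncy (erefl _) avoid.
by exists xp, yp', d, (X1 ++ y :: D1), D2.
Qed.

Lemma bireachable_of_no_cut p : z != r -> dipath e S r z p -> bireachable e S r z.
Proof.
move=> Nzr; case: p => [|x1 p] Dp; first by case: Dp Nzr => _ /= -> _ _; rewrite eqxx.
have M : meeting_paths (x1 :: p) [:: x1] x1 [::] p.
  split=> //; last by move=> w; rewrite inE => /eqP.
  by move: Dp; rewrite -cat1s => /dipath_split[].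
suff meet_bireachable n xp yp y X1 X2 :
  size X2 < n -> meeting_paths xp yp y X1 X2 -> bireachable e S r z.
  exact: meet_bireachable (ltnSn _) M.
elim: n xp yp y X1 X2 => [//|n IH] xp yp y X1 X2 lt_n M'.
have [Eyz|Nyz] := eqVneq y z; first by rewrite Eyz in M'; exact: meeting_paths_at_end M'.
have [xp' [yp' [d [X1' [X2' [M'' lt']]]]]] := meeting_paths_step M' Nyz.
by apply: IH M''; apply: leq_trans lt' _; rewrite -ltnS.
Qed.

End Menger.

(* The vertex set X_x ∪ {x} on which the subtree of the decomposition rooted at x lives. *)
Definition branch (V : finType) (e : rel V) (S : V -> Prop) (r x : V) : V -> Prop :=
  fun v => in_X e S r x v \/ v = x.

Definition rooted (V : finType) (e : rel V) (S : V -> Prop) (r : V) : Prop :=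
  S r /\ forall w, S w -> exists p, dipath e S r w p.

Section Diblock.
Variables (V : finType) (e : rel V) (S : V -> Prop) (r : V).
Hypothesis Sr : S r.
Implicit Types (a b u w z : V) (p q : seq V).

Lemma in_diblock_root : in_diblock e S r r.
Proof. by split=> //; left. Qed.

Lemma bireachable_of_entries a b z qa qb :
  in_diblock e S r a -> in_diblock e S r b ->
  dipath e S a z qa -> dipath e S b z qb ->
  (forall u, u \in a :: qa -> u \in b :: qb -> u = z) ->
  z != r -> bireachable e S r z.
Proof.
move=> Ba Bb Da Db meet Nzr.
have route c qc u : in_diblock e S r c -> dipath e S c z qc ->
    u != r -> u \notin c :: qc -> exists p, dipath e S r z p /\ u \notin p.
  move=> Bc Dc Nur uc; have Nuc : u != c by apply: contraNneq uc => ->; rewrite mem_head.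
  have [pc [Drc upc]] := bireachable_avoid (in_diblock_bireachable Sr Bc) Nur Nuc.
  have [p [Dp sub]] := dipath_shorten_cat Drc Dc.
  exists p; split=> //; apply/negP => /sub; rewrite mem_cat (negbTE upc) /=.
  by apply/negP; apply: contra uc => uqc; rewrite in_cons uqc orbT.
have [pa [_ [Dra _ _]]] := in_diblock_bireachable Sr Ba.
have [p [Dp _]] := dipath_shorten_cat Dra Da.
apply: (bireachable_of_no_cut _ Nzr Dp) => u Nur Nuz.
have [ua|ua] := boolP (u \in a :: qa); last exact: route Ba Da Nur ua.
by apply: route Bb Db Nur _; apply: contra Nuz => ub; rewrite (meet u ua ub).
Qed.

Lemma last_diblock_hit_unique w p p' x1 x2 :
  dipath e S r w p -> dipath e S r w p' -> ~ in_diblock e S r w ->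
  last_hit_is (in_diblock e S r) (r :: p) x1 ->
  last_hit_is (in_diblock e S r) (r :: p') x2 -> x1 = x2.
Proof.
move=> Dp Dp' Nw /(last_hit_isP in_diblock_root) [P1 [P2 [Ep <- Ba N2]]].
move=> /(last_hit_isP in_diblock_root) [P1' [P2' [Ep' <- Bb N2']]].
apply: NNPP => Nab; set a := last r P1 in Ba N2 Nab; set b := last r P1' in Bb Nab.
move: Dp Dp'; rewrite Ep Ep' => /dipath_split[_ Da] /dipath_split[_ Db].
have wP2 : w \in P2.
  case: (Da) => _ last2 _ _; have : w \in a :: P2 by rewrite -last2 mem_last.
  by rewrite in_cons => /predU1P[wa|//]; case: Nw; rewrite wa.
have hit : has (mem (b :: P2')) P2.
  by apply/hasP; exists w => //; case: (Db) => _ <- _ _; apply: mem_last.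
move: Da N2; case/split_find: hit => z A1 A2 zb NA1 Da N2.
have NBz : ~ in_diblock e S r z by apply: N2; rewrite mem_cat mem_rcons mem_head.
have [C1 [C2 [EP2' lastC1]]] := split_at_mem zb.
move: Da Db; rewrite EP2' => /dipath_split[+ _] /dipath_split[+ _].
rewrite last_rcons lastC1 => Da Db.
have Nzr : z != r by apply: contra_not_neq NBz => ->; exact: in_diblock_root.
apply: NBz; split; first exact: dipath_last Da.
right; right; apply: (bireachable_of_entries Ba Bb Da Db _ Nzr).
move=> u; rewrite in_cons mem_rcons in_cons => /or3P[/eqP->|/eqP//|uA1] ub.
  move: ub; rewrite in_cons => /predU1P[ab|aC1]; first by case: Nab.
  by case: (N2' a); rewrite // EP2' mem_cat aC1.
have ub' : u \in b :: P2'.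
  by move: ub; rewrite !in_cons EP2' mem_cat => /orP[->|->]; rewrite ?orbT.
by case/hasP: NA1; exists u.
Qed.

Lemma in_X_of_path x w p : dipath e S r w p -> ~ in_diblock e S r w ->
  last_hit_is (in_diblock e S r) (r :: p) x -> in_X e S r x w.
Proof.
move=> Dp Nw hit; split=> //; first exact: dipath_last Dp.
move=> p' Dp'; have [P1 [P2 [Ep' B1 N2]]] := split_last_hit p' in_diblock_root.
have := last_hit_is_cat B1 N2; rewrite -Ep' => hit'.
by rewrite (last_diblock_hit_unique Dp Dp' Nw hit hit').
Qed.

Lemma dipath_branch_suffix w P1 P2 : dipath e S r w (P1 ++ P2) ->
  in_diblock e S r (last r P1) -> (forall u, u \in P2 -> ~ in_diblock e S r u) ->
  dipath e (branch e S r (last r P1)) (last r P1) w P2.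
Proof.
move=> Dp B1 N2; have [_ [path2 last2 U2 _]] := dipath_split Dp.
split=> // u; rewrite in_cons => /predU1P[->|uP2]; [by right | left].
have [V1 [V2 [EP2 lastV1]]] : exists V1 V2, P2 = V1 ++ V2 /\ last (last r P1) V1 = u.
  by apply: split_at_mem; rewrite in_cons uP2 orbT.
have N1 u' : u' \in V1 -> ~ in_diblock e S r u'.
  by move=> u'V1; apply: N2; rewrite EP2 mem_cat u'V1.
have Du : dipath e S r u (P1 ++ V1).
  by move: Dp; rewrite EP2 catA => /dipath_split[+ _]; rewrite last_cat lastV1.
exact: in_X_of_path Du (N2 u uP2) (last_hit_is_cat B1 N1).
Qed.

Lemma bottleneck_of_path w p : dipath e S r w p -> ~ in_diblock e S r w ->
  exists y, [/\ bottleneck e S r y, in_X e S r y w & y \in p].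
Proof.
move=> Dp Nw; have [P1 [P2 [Ep B1 N2]]] := split_last_hit p in_diblock_root.
have Xw : in_X e S r (last r P1) w.
  by apply: in_X_of_path Dp Nw _; rewrite Ep; exact: last_hit_is_cat.
case: P1 Ep B1 N2 Xw => [|y1 P1] Ep B1 N2 Xw /=.
  case: P2 Ep N2 => [|x1 P2] Ep N2; first by case: Dp Nw => _ <- _ _; rewrite Ep.
  move: Dp; rewrite Ep => -[/andP[rx1 _] _ _ Sp]; case: (N2 x1 (mem_head _ _)).
  by split; [apply: Sp; rewrite !in_cons eqxx orbT | right; left].
exists (last y1 P1); split=> //; last by rewrite Ep mem_cat mem_last.
split=> //; last by exists w.
by case: Dp => _ _ /andP[+ _] _; apply: contraNnot => <-; rewrite Ep mem_cat mem_last.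
Qed.

Lemma split_at_bottleneck x v P : branch e S r x v -> dipath e S r v P ->
  exists P1 P2, [/\ P = P1 ++ P2, last r P1 = x &
    forall u, u \in P2 -> ~ in_diblock e S r u].
Proof.
case=> [[_ _ hit]|->] DP.
  by have [P1 [P2 [EP lastP1 _ N2]]] := last_hit_isP in_diblock_root (hit P DP); exists P1, P2.
by exists P, [::]; rewrite cats0; case: DP.
Qed.

End Diblock.

Section CutDecomposition.
Variables (V : finType) (e : rel V).
Implicit Types (S : V -> Prop) (r u v w x : V).

Lemma rooted_branch S r x : rooted e S r -> bottleneck e S r x ->
  rooted e (branch e S r x) x.
Proof.
move=> [Sr reach] [Bx _ _]; split; first by right.
move=> w [Xw|->]; last by exists [::]; apply: dipath_nil; right.
case: (Xw) => Sw Nw hit; have [p Dp] := reach w Sw.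
have [P1 [P2 [Ep <- B1 N2]]] := last_hit_isP (in_diblock_root e Sr) (hit p Dp).
by exists P2; apply: dipath_branch_suffix => //; rewrite -Ep.
Qed.

Lemma cut_node_head S r q B : cut_node e S r q B -> exists q', q = r :: q'.
Proof. by case=> [S' r'|S' r' x p B' _ _]; [exists [::] | exists p]. Qed.

Lemma cut_node_sub S r q B : cut_node e S r q B -> forall u, B u -> S u.
Proof.
elim=> [S' r' u [] //|S' r' x p B' [[Sx _] _ _] _ IH u /IH].
by case=> [[]|->].
Qed.

Lemma cut_node_cover S r w : rooted e S r -> S w ->
  exists q B, cut_node e S r q B /\ B w.
Proof.
suff cover n S' r' : (exists l : seq V, size l <= n /\ forall v, S' v -> v \in l) ->
    rooted e S' r' -> S' w -> exists q B, cut_node e S' r' q B /\ B w.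
  by apply: (cover #|V|); exists (enum V); rewrite -cardE; split=> // v _; rewrite mem_enum.
elim: n S' r' => [|n IH] S' r' [l [size_l Sl]] [Sr reach] Sw.
  by move: size_l (Sl r' Sr); rewrite leqn0 => /nilP->.
have [Bw|Nw] := classic (in_diblock e S' r' w).
  by exists [:: r'], (in_diblock e S' r'); split=> //; constructor.
have [p Dp] := reach w Sw.
have [y [By Xw _]] := bottleneck_of_path Sr Dp Nw.
have RB := rooted_branch (conj Sr reach) By.
have [|q [B [Cq Bw]]] := IH (branch e S' r' y) y _ RB (or_introl Xw).
  exists (rem r' l); split; first by rewrite size_rem ?Sl // -subn1 leq_subLR add1n.
  case: By => [[Sy _] Nyr _] v [[Sv Nv _]|->]; apply: rem_mem; rewrite ?Sl //.
    by apply: contra_not_neq Nv => ->; exact: in_diblock_root.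
  exact/eqP.
by exists (r' :: q), B; split=> //; apply: cut_sub By Cq.
Qed.

Definition in_fin_union_of S r (xs : seq V) i u : Prop :=
  exists q B, [/\ cut_node e S r q B, prefix (take i.+1 xs) q,
    ~~ prefix (take i.+2 xs) q & B u].

Lemma in_fin_union_of_branch S r x xs i u : bottleneck e S r x ->
  in_fin_union_of (branch e S r x) x xs i u -> in_fin_union_of S r (r :: xs) i.+1 u.
Proof.
move=> Bot [q [B [Cq pre1 Npre2 Bu]]].
by exists (r :: q), B; split; rewrite //= ?eqxx //; apply: cut_sub Bot Cq.
Qed.

Lemma first_fin_before_bottleneck S r x xs p1 u : rooted e S r ->
  dipath e S r x p1 -> u \in belast r p1 -> in_fin_union_of S r (r :: x :: xs) 0 u.
Proof.
move=> RS Dx ub; have Sr := RS.1.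
have Ux : uniq (r :: p1) by case: Dx.
have Nux : u != x.
  have : uniq (rcons (belast r p1) x) by case: Dx => _ <- U _; rewrite -lastI.
  by rewrite rcons_uniq => /andP[+ _]; apply: contraNneq => <-.
have [Bu|Nu] := classic (in_diblock e S r u).
  by exists [:: r], (in_diblock e S r); split; rewrite //= ?eqxx //; constructor.
have [U1 [U2 [Ep1 lastU1]]] : exists U1 U2, p1 = U1 ++ U2 /\ last r U1 = u.
  by apply: split_at_mem; rewrite lastI mem_rcons in_cons ub orbT.
have Du : dipath e S r u U1 by move: Dx; rewrite Ep1 => /dipath_split[]; rewrite lastU1.
have [y [By Xu yU1]] := bottleneck_of_path Sr Du Nu.
have Nxy : x != y.
  have xU2 : x \in U2.
    have : x \in u :: U2 by case: Dx => _ <- _ _; rewrite Ep1 last_cat lastU1 mem_last.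
    by rewrite in_cons eq_sym (negbTE Nux).
  apply: contraTneq xU2 => ->; apply: (uniq_cat_notin (s1 := U1)) => //.
  by move: Ux; rewrite Ep1 => /andP[].
have [q [B [Cq Bu]]] := cut_node_cover (rooted_branch RS By) (or_introl Xu).
have [q' Eq] := cut_node_head Cq; subst q.
exists [:: r, y & q'], B; split; rewrite //= ?eqxx ?(negbTE Nxy) //.
exact: cut_sub By Cq.
Qed.

Lemma cut_node_path_fins S r xs Bx : cut_node e S r xs Bx -> rooted e S r ->
  forall v P, Bx v -> dipath e S r v P -> forall i, i < (size xs).-1 ->
  [/\ nth r xs i \in r :: P, nth r xs i.+1 \in r :: P,
    index (nth r xs i) (r :: P) < index (nth r xs i.+1) (r :: P) &
    forall j, index (nth r xs i) (r :: P) <= j < index (nth r xs i.+1) (r :: P) ->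
      in_fin_union_of S r xs i (nth r (r :: P) j)].
Proof.
elim=> [S' r'|{}S {}r x p B Bot Cp IH] RS v P Bv DP i lt_i; first by rewrite ltn0 in lt_i.
have [p' Ep] := cut_node_head Cp; subst p.
have Sr := RS.1.
have [P1 [P2 [EP lastP1 N2]]] := split_at_bottleneck Sr (cut_node_sub Cp Bv) DP.
have [_ Nxr _] := Bot.
have DP1 : dipath e S r x P1 by move: DP; rewrite EP => /dipath_split[]; rewrite lastP1.
have DP2 : dipath e (branch e S r x) x v P2.
  by move: DP; rewrite EP => /(dipath_branch_suffix Sr); rewrite lastP1; apply; case: Bot.
have EQ : r :: P = belast r P1 ++ x :: P2 by rewrite EP -cat_cons lastI lastP1 cat_rcons.
have UQ : uniq (belast r P1 ++ x :: P2) by rewrite -EQ; case: DP.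
have idxQ w : w \in x :: P2 -> index w (r :: P) = size P1 + index w (x :: P2).
  by move=> w2; rewrite EQ index_cat_uniq // size_belast.
have subQ w : w \in x :: P2 -> w \in r :: P by rewrite EQ mem_cat => ->; rewrite orbT.
case: i lt_i => [_|i lt_i].
  have P1_gt0 : 0 < size P1 by case: P1 lastP1 {EP DP1 EQ UQ idxQ} => // /esym.
  rewrite [nth _ _ 0]/= [nth _ _ 1]/= (idxQ x (mem_head _ _)) !index_head addn0.
  split=> //; [exact: mem_head | exact: subQ (mem_head _ _) |].
  move=> j /andP[_ lt_j]; rewrite EQ nth_cat size_belast lt_j.
  by apply: first_fin_before_bottleneck RS DP1 _; apply: mem_nth; rewrite size_belast.
have E1 : nth r [:: r, x & p'] i.+1 = nth x (x :: p') i.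
  by rewrite /= (set_nth_default x) // ltnW.
have E2 : nth r [:: r, x & p'] i.+2 = nth x (x :: p') i.+1.
  by rewrite /= (set_nth_default x).
have [H1 H2 H3 H4] := IH (rooted_branch RS Bot) v P2 Bv DP2 i lt_i.
rewrite E1 E2 (idxQ _ H1) (idxQ _ H2).
split; [exact: subQ | exact: subQ | by rewrite ltn_add2l |].
move=> j /andP[lo hi].
have lt_idx : index (nth x (x :: p') i.+1) (x :: P2) < size (x :: P2) by rewrite index_mem.
have Ej : nth r (r :: P) j = nth x (x :: P2) (j - size P1).
  rewrite EQ nth_cat size_belast ltnNge (leq_trans (leq_addr _ _) lo) /=.
  by rewrite (set_nth_default x) //; lia.
by rewrite Ej; apply: in_fin_union_of_branch Bot _; apply: H4; apply/andP; split; lia.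
Qed.

End CutDecomposition.

Theorem lemma10 (V : finType) (e : rel V) (r x v : V) (xs : seq V)
    (Bx : V -> Prop) (P : seq V) :
  (forall u, ~~ e u u) -> 1 < #|V| -> (forall u, connect e r u) ->
  cut_node e (fun _ => True) r xs Bx -> last r xs = x -> Bx v ->
  dipath e (fun _ => True) r v P ->
  forall i, i < (size xs).-1 ->
    let Q := r :: P in
    let xi := nth r xs i in
    let xi1 := nth r xs i.+1 in
    [/\ xi \in Q, xi1 \in Q, index xi Q < index xi1 Q &
      forall j, index xi Q <= j < index xi1 Q ->
        in_fin_union e r xs i (nth r Q j)].
Proof.
move=> _ _ reach Cxs _ Bv DP i lt_i.
have RH : rooted e (fun _ => True) r.
  split=> // w _; have /connectP[q path_q ->] := reach w.
  by have [p [Dp _]] := shorten_dipath I path_q (fun _ _ => I); exists p.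
exact: cut_node_path_fins Cxs RH v P Bv DP i lt_i.
Qed.
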